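(* Let $(N,v)$ be a TU game and $\delta>0$. Any state $(\mathbf{x},\rho)\in\Pi(v)$ is absorbing for the Coalition Proposal algorithm (described in the context): if the environment state is $(\mathbf{x},\rho)$, with every player $i$ having aspiration $a_i=x_i$ and coalition state $C_i$ equal to the block of $\rho$ containing $i$, then no proposal changes the aspirations or the coalition structure.
   Context: A TU game is a pair $(N,v)$ with $N=\{1,\dots,n\}$ and $v:2^N\to\mathbb{R}$, $v(\emptyset)=0$. $\mathcal{P}(N)$ denotes the set of partitions of $N$. A core solution is a pair $(\mathbf{x},\rho)$ with $\mathbf{x}\in\mathbb{R}^n$, $\rho\in\mathcal{P}(N)$, such that $\sum_{i\in S}x_i\ge v(S)$ for all $S\subseteq N$ and $\sum_{i\in S}x_i=v(S)$ for all $S\in\rho$; $\Pi(v)$ is the set of core solutions. Coalition Proposal algorithm with step $\delta$: each player $i$ holds an aspiration $a_i$ and a coalition state $C_i\subseteq N$. In each iteration: a player $i\in N$ is activated at random; $i$ chooses at random a set $S\subseteq N\setminus\{i\}$ and proposes $J=S\cup\{i\}$. If $\sum_{j\in J}a_j+\delta\le v(J)$ (success): $a_i\leftarrow a_i+\delta$; then for every $j\in J$ and every $k\in C_j$ with $k\neq j$, set $C_k\leftarrow\emptyset$; then set $C_j\leftarrow J$ for all $j\in J$. Otherwise (failure): if $C_i=\emptyset$, set $a_i\leftarrow\max(v(\{i\}),a_i-\delta)$. Finally, if $a_i=v(\{i\})$ and $C_i=\emptyset$, set $C_i\leftarrow\{i\}$. The environment state is $(\mathbf{a},\mathcal{C})$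 with $\mathbf{a}=(a_1,\dots,a_n)$ and $\mathcal{C}=\{C_i:i\in N\}$ the set of formed coalitions. *)

From mathcomp Require Import all_boot all_order all_algebra.
Set Implicit Arguments. Unset Strict Implicit. Unset Printing Implicit Defensive.
Import Order.TTheory GRing.Theory Num.Theory.
Local Open Scope ring_scope.

Definition tu_game (R : realFieldType) (n : nat) (v : {set 'I_n} -> R) : Prop :=
  v set0 = 0.

Definition core_solution (R : realFieldType) (n : nat) (v : {set 'I_n} -> R)
    (x : 'I_n -> R) (rho : {set {set 'I_n}}) : Prop :=
  partition rho [set: 'I_n] /\
  (forall S : {set 'I_n}, v S <= \sum_(i in S) x i) /\
  (forall S : {set 'I_n}, S \in rho -> \sum_(i in S) x i = v S).

Record cp_state (R : realFieldType) (n : nat) := CPState {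
  asp : 'I_n -> R;
  coal : 'I_n -> {set 'I_n}
}.

Definition cp_step (R : realFieldType) (n : nat) (v : {set 'I_n} -> R)
    (delta : R) (st : cp_state R n) (i : 'I_n) (S : {set 'I_n}) : cp_state R n :=
  let a := asp st in
  let C := coal st in
  let J := S :|: [set i] in
  let '(a1, C1) :=
    if \sum_(j in J) a j + delta <= v J then
      ((fun k => if k == i then a k + delta else a k),
       (fun k => if k \in J then J
                 else if [exists j in J, (k \in C j) && (k != j)] then set0
                 else C k))
    else if C i == set0 then
      ((fun k => if k == i then Num.max (v [set i]) (a k - delta) else a k), C)
    else (a, C) in
  let C2 := if (a1 i == v [set i]) && (C1 i == set0)
            then (fun k => if k == i then [set i] else C1 k) else C1 in
  CPState a1 C2.

Definition cp_run (R : realFieldType) (n : nat) (v : {set 'I_n} -> R)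
    (delta : R) (st : cp_state R n) (props : seq ('I_n * {set 'I_n})) :=
  foldl (fun s p => cp_step v delta s p.1 p.2) st props.

From mathcomp Require Import all_boot all_order all_algebra.
Import Order.TTheory GRing.Theory Num.Theory.
Local Open Scope ring_scope.

(* At a core solution every proposal J fails, since v J <= x(J) < x(J) + delta,
   and the proposer is not penalised because its coalition state, its block of
   rho, is nonempty. Hence every step is the identity. *)

Lemma pblock_partition_neq0 (T : finType) (P : {set {set T}}) (x : T) :
  partition P [set: T] -> pblock P x != set0.
Proof.
move=> partP; apply/set0Pn; exists x.
by rewrite mem_pblock (cover_partition partP) inE.
Qed.

Lemma cp_step_failed_id (R : realFieldType) (n : nat) (v : {set 'I_n} -> R)
    (delta : R) (st : cp_state R n) (i : 'I_n) (S : {set 'I_n}) :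
  v (S :|: [set i]) < \sum_(j in S :|: [set i]) asp st j + delta ->
  coal st i != set0 ->
  cp_step v delta st i S = st.
Proof.
case: st => a C /= failJ /negbTE Ci_neq0.
by rewrite /cp_step /= leNgt failJ Ci_neq0 /= Ci_neq0 andbF.
Qed.

Lemma cp_run_fixpoint (R : realFieldType) (n : nat) (v : {set 'I_n} -> R)
    (delta : R) (st : cp_state R n) (props : seq ('I_n * {set 'I_n})) :
  (forall i S, cp_step v delta st i S = st) -> cp_run v delta st props = st.
Proof. by move=> step_id; rewrite /cp_run; elim: props => //= p ps; rewrite step_id. Qed.

Lemma cp_step_core_solution_id (R : realFieldType) (n : nat)
    (v : {set 'I_n} -> R) (delta : R) (x : 'I_n -> R)
    (rho : {set {set 'I_n}}) (i : 'I_n) (S : {set 'I_n}) :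
  0 < delta -> core_solution v x rho ->
  cp_step v delta (CPState x (pblock rho)) i S = CPState x (pblock rho).
Proof.
move=> delta_gt0 [partRho [x_core _]].
apply: cp_step_failed_id; last exact: pblock_partition_neq0.
by apply: (le_lt_trans (x_core _)); rewrite ltrDl.
Qed.

Theorem proposition10 (R : realFieldType) (n : nat) (v : {set 'I_n} -> R)
    (delta : R) (x : 'I_n -> R) (rho : {set {set 'I_n}}) :
  tu_game v -> 0 < delta -> core_solution v x rho ->
  forall props : seq ('I_n * {set 'I_n}),
    all (fun p : 'I_n * {set 'I_n} => p.1 \notin p.2) props ->
    let st := cp_run v delta (CPState x (fun k => pblock rho k)) props in
    (forall k, asp st k = x k) /\ (forall k, coal st k = pblock rho k).
Proof.
move=> _ delta_gt0 xrho props _ /=.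
by rewrite cp_run_fixpoint // => i S; exact: cp_step_core_solution_id.
Qed.
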